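(* Let $m\ge 1$. In the checker game on $2m+1$ positions, the configuration $b^mOw^m$ can be transformed, by a sequence of exactly $\frac{m(m+1)}{2}$ legal moves, into one of the configurations $O(bw)^m$ or $(bw)^mO$.
   Context: Positions $1,\dots,2m+1$ in a row; a configuration is a word over $\{b,w,O\}$ with exactly one $O$, where $b$ denotes a black checker, $w$ a white checker and $O$ the vacancy; $(bw)^m$ denotes $bw$ repeated $m$ times. A legal move is either a slide (a checker adjacent to the vacancy moves into it) or a jump (a checker at distance two from the vacancy jumps over the checker between them into the vacancy). *)

From mathcomp Require Import all_boot.
Set Implicit Arguments. Unset Strict Implicit. Unset Printing Implicit Defensive.

Inductive cell := Bc | Wc | Oc.

(* A configuration: a word over {b,w,O}; positions are 0-indexed here. *)
Definition config := seq cell.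

Definition legal_move (c c' : config) : Prop :=
  exists i j : nat,
    i < size c /\ j < size c /\
        nth Oc c i = Oc /\ nth Oc c j <> Oc /\
        (j = i.+1 \/ i = j.+1 \/
         (j = i.+2 /\ nth Oc c i.+1 <> Oc) \/
         (i = j.+2 /\ nth Oc c j.+1 <> Oc)) /\
        c' = set_nth Oc (set_nth Oc c i (nth Oc c j)) j Oc.

Inductive moves : nat -> config -> config -> Prop :=
  | moves0 c : moves 0 c c
  | movesS k c c' c'' : legal_move c c' -> moves k c' c'' -> moves k.+1 c c''.

Definition start_config (m : nat) : config := nseq m Bc ++ Oc :: nseq m Wc.
Definition bw_pow (m : nat) : config := flatten (nseq m [:: Bc; Wc]).

From mathcomp Require Import all_boot.
From mathcomp Require Import zify.

(* The vacancy sweeps back and forth through a growing alternating core.  In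
   the intermediate stage  b^a O b (wb)^k w^c  the vacancy crosses the core
   (bw)^(k+1) to its right by k+1 jumps, and one slide of a white checker
   produces the mirror stage  b^c (wb)^(k+1) w O w^a,  whose core is one pair
   longer.  A sweep thus costs k+2 moves; starting from the first slide
   b^(m-1) O b w^m, the m-1 sweeps cost 2(m-1) + C(m-1,2) moves, which
   together with the first slide gives C(m+1,2) = m(m+1)/2. *)

Definition wb_pow (k : nat) : config := flatten (nseq k [:: Wc; Bc]).

Lemma legal_move_cons x c c' : legal_move c c' -> legal_move (x :: c) (x :: c').
Proof.
move=> [i [j [ltis [ltjs [ci [cj [ij ->]]]]]]].
exists i.+1, j.+1; do 4 (split; first by []).
by split=> //; case: ij => [->|[->|[[-> ?]|[-> ?]]]]; auto.
Qed.

Lemma legal_move_catl L c c' : legal_move c c' -> legal_move (L ++ c) (L ++ c').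
Proof. by elim: L => //= x L IH /IH; apply: legal_move_cons. Qed.

Section ElementaryMoves.
Variables (L R : config) (x y : cell).
Hypotheses (x_checker : x <> Oc) (y_checker : y <> Oc).

Lemma legal_slide_left : legal_move (L ++ Oc :: x :: R) (L ++ x :: Oc :: R).
Proof.
by apply: legal_move_catl; exists 0, 1;
   do 4 (split; first by []); split; [left|].
Qed.

Lemma legal_slide_right : legal_move (L ++ x :: Oc :: R) (L ++ Oc :: x :: R).
Proof.
by apply: legal_move_catl; exists 1, 0;
   do 4 (split; first by []); split; [right; left|].
Qed.

Lemma legal_jump_left : legal_move (L ++ Oc :: x :: y :: R) (L ++ y :: x :: Oc :: R).
Proof.
by apply: legal_move_catl; exists 0, 2;
   do 4 (split; first by []); split; [do 2 right; left|].
Qed.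

Lemma legal_jump_right : legal_move (L ++ x :: y :: Oc :: R) (L ++ Oc :: y :: x :: R).
Proof.
by apply: legal_move_catl; exists 2, 0;
   do 4 (split; first by []); split; [do 3 right|].
Qed.

End ElementaryMoves.

Lemma moves1 {c c'} : legal_move c c' -> moves 1 c c'.
Proof. by move=> mv; apply: movesS mv (moves0 _). Qed.

Lemma moves_trans {a b x y z} : moves a x y -> moves b y z -> moves (a + b) x z.
Proof. by elim=> // k c c' c'' mv _ IH /IH; apply: movesS mv. Qed.

Lemma moves_addn1 {a x y z} : moves a x y -> legal_move y z -> moves a.+1 x z.
Proof. by move=> mvs /moves1 mv; rewrite -addn1; apply: moves_trans mvs mv. Qed.

Lemma nseq_consr (T : Type) n (x : T) s : x :: nseq n x ++ s = nseq n x ++ x :: s.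
Proof. by elim: n => //= n ->. Qed.

Lemma bw_powS_wb_pow k s : Bc :: wb_pow k ++ Wc :: s = bw_pow k.+1 ++ s.
Proof. by elim: k s => //= k IH s; rewrite IH. Qed.

Lemma vacancy_cross_bw_pow_right k L R :
  moves k (L ++ Oc :: bw_pow k ++ R) (L ++ wb_pow k ++ Oc :: R).
Proof.
elim: k L => [|k IH] L /=; first exact: moves0.
apply: movesS (legal_jump_left _ _ _ _ _ _) _ => //.
by have := IH (L ++ [:: Wc; Bc]); rewrite -!catA.
Qed.

Lemma vacancy_cross_bw_pow_left k L R :
  moves k (L ++ bw_pow k ++ Oc :: R) (L ++ Oc :: wb_pow k ++ R).
Proof.
elim: k R => [|k IH] R; first exact: moves0.
have bw_powSr : bw_pow k.+1 = bw_pow k ++ [:: Bc; Wc].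
  by rewrite /bw_pow -addn1 nseqD flatten_cat.
have wb_powSr : wb_pow k.+1 = wb_pow k ++ [:: Wc; Bc].
  by rewrite /wb_pow -addn1 nseqD flatten_cat.
rewrite bw_powSr wb_powSr -!catA /= catA.
apply: movesS (legal_jump_right _ _ _ _ _ _) _ => //.
by rewrite -catA; apply: IH.
Qed.

Definition stage_left a k c : config := nseq a Bc ++ Oc :: Bc :: wb_pow k ++ nseq c Wc.
Definition stage_right a k c : config := nseq c Bc ++ wb_pow k ++ Wc :: Oc :: nseq a Wc.

Lemma sweep_right a k c : moves k.+2 (stage_left a k c.+2) (stage_right c k.+1 a).
Proof.
rewrite /stage_left /stage_right /= bw_powS_wb_pow.
apply: moves_addn1 (vacancy_cross_bw_pow_right _ _ _) _.
by have := legal_slide_left (nseq a Bc ++ wb_pow k.+1) (nseq c Wc) Wc; rewrite -!catA; apply.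
Qed.

Lemma sweep_left a k c : moves k.+2 (stage_right a k c.+2) (stage_left c k.+1 a).
Proof.
rewrite /stage_left /stage_right.
have -> : nseq c.+2 Bc ++ wb_pow k ++ Wc :: Oc :: nseq a Wc =
          nseq c.+1 Bc ++ bw_pow k.+1 ++ Oc :: nseq a Wc.
  by rewrite -bw_powS_wb_pow -nseq_consr.
apply: moves_addn1 (vacancy_cross_bw_pow_left _ _ _) _.
by rewrite [nseq c.+1 _ ++ _]/= nseq_consr; apply: legal_slide_right.
Qed.

Definition final_config (vacancy_first : bool) n : config :=
  if vacancy_first then Oc :: bw_pow n else bw_pow n ++ [:: Oc].

Lemma sweeps j k :
  moves (j * k.+2 + 'C(j, 2)) (stage_left j k j.+1) (final_config (~~ odd j) (j + k).+1) /\
  moves (j * k.+2 + 'C(j, 2)) (stage_right j k j.+1) (final_config (odd j) (j + k).+1).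
Proof.
elim: j k => [|j IH] k.
  by rewrite /stage_left /stage_right /final_config /= !bw_powS_wb_pow cats0;
     split; apply: moves0.
have -> : j.+1 * k.+2 + 'C(j.+1, 2) = k.+2 + (j * k.+3 + 'C(j, 2)).
  by rewrite binS bin1; lia.
rewrite [odd j.+1]/= negbK (addSnnS j k); have [from_left from_right] := IH k.+1.
by split; [apply: moves_trans (sweep_right _ _ _) from_right
          | apply: moves_trans (sweep_left _ _ _) from_left].
Qed.

Theorem lemma2 (m : nat) : 1 <= m ->
  moves (m * m.+1 %/ 2) (start_config m) (Oc :: bw_pow m) \/
  moves (m * m.+1 %/ 2) (start_config m) (bw_pow m ++ [:: Oc]).
Proof.
case: m => // j _.
have count : j.+1 * j.+2 %/ 2 = 1 + (j * 2 + 'C(j, 2)).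
  by rewrite mulnC divn2 -bin2 !binS bin1 bin0; lia.
have first_slide : legal_move (start_config j.+1) (stage_left j 0 j.+1).
  by rewrite /start_config /stage_left /= nseq_consr; apply: legal_slide_right.
have [sweeps_end _] := sweeps j 0.
have all_moves := moves_trans (moves1 first_slide) sweeps_end.
by rewrite count; move: all_moves; rewrite addn0 /final_config; case: ifP => _; [left|right].
Qed.
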